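(* Let $k\ge1$ and $n$ be integers. For the graph $G(n,k)$ the following are equivalent: (A) $G(n,k)$ has no cycles; (B) both $k-1$ and $(n-3)_{k+1}$ lie in the tail; (C) both $0$ and $(n-1)_{k+1}$ lie in the tail; (D) both $0$ and $k-1$ lie in the tail.
   Context: For an integer $\ell$, $\ell_k$ and $\ell_{k+1}$ denote the least nonnegative residues of $\ell$ modulo $k$ and $k+1$. $G(n,k)$ is the directed graph on vertices $0,1,\dots,k$ whose edges are exactly the $k$ edges $(i+n-2)_{k+1}\to(i+n-1)_k$, $1\le i\le k$; a loop $a\to a$ counts as a cycle. Vertex $k$ has in-degree $0$, vertex $(n-2)_{k+1}$ has out-degree $0$, and all other vertices have in- and out-degree $1$, so $G(n,k)$ is a disjoint union of directed cycles and one directed path, the tail, from $k$ to $(n-2)_{k+1}$ (consisting of the single vertex $k$ if $k=(n-2)_{k+1}$). *)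

From mathcomp Require Import all_boot all_order all_algebra.
Set Implicit Arguments. Unset Strict Implicit. Unset Printing Implicit Defensive.
Import Order.TTheory GRing.Theory Num.Theory.
Local Open Scope ring_scope.

Definition res (l : int) (m : nat) : int := (l %% m%:Z)%Z.

(* Edge relation of G(n,k) on vertices (integers; all edge endpoints lie in {0..k}):
   the k edges (i+n-2)_{k+1} -> (i+n-1)_k, 1 <= i <= k. *)
Definition Gedge (n : int) (k : nat) : rel int :=
  fun a b => [exists i : 'I_k,
     (a == res (i.+1%:Z + n - 2) k.+1) && (b == res (i.+1%:Z + n - 1) k)].

(* G(n,k) has a (directed) cycle: a nonempty closed walk; a loop a -> a counts. *)
Definition has_cycle (n : int) (k : nat) : Prop :=
  exists s : seq int, s != [::] /\ cycle (Gedge n k) s.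

(* v lies in the tail: the directed path starting at vertex k, i.e. v is
   reachable from k by a directed walk (possibly empty). *)
Definition in_tail (n : int) (k : nat) (v : int) : Prop :=
  exists s : seq int, path (Gedge n k) k%:Z s /\ last k%:Z s = v.

From mathcomp Require Import all_boot all_order all_algebra.
From mathcomp Require Import zify.
Set Implicit Arguments. Unset Strict Implicit. Unset Printing Implicit Defensive.
Import Order.TTheory GRing.Theory Num.Theory.
Local Open Scope ring_scope.

(* Off the sink z = (n-2)_{k+1}, the edge map first closes the gap left by z
   in {0..k} and then rotates {0..k-1}; so it sends consecutive non-sink
   vertices x, x+1 to consecutive vertices, unless the rotation wraps k-1 to 0.
   The vertices off the tail are exactly those on cycles.  If there is a
   cycle, let M be the largest cyclic vertex: M+1 is on the tail, and walking
   from M and from M+1 in parallel (no wrap occurs if k-1 is on the tail), the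
   tail reaches z while the cycle is at z-1 = (n-3)_{k+1}, which is thus off
   the tail.
   The smallest cyclic vertex m, with 0 and (n-1)_{k+1}, is symmetric; if both
   0 and k-1 are on the tail, the parallel walk starting from whichever of
   m-1, M+1 comes first on the tail drives the cycle below m or above M. *)

Section RestrictedFunctionGraph.
Variables (T : eqType) (f : T -> T).

Lemma periodic_iter_in_traject x i m :
  (0 < i)%N -> iter i f x = x -> iter m f x \in traject f x i.
Proof.
move=> i_gt0 ix; move: m; apply/loopingP; rewrite /looping ix.
by case: i i_gt0 {ix} => // i _; apply: mem_head.
Qed.

Variable D : pred T.

Definition frel_in : rel T := [rel a b | D a && (b == f a)].

Lemma path_frel_in x s :
  path frel_in x s = (s == traject f (f x) (size s)) && all D (traject f x (size s)).
Proof.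
elim: s x => [|y s IHs] x //=; rewrite IHs eqseq_cons /frel_in /=.
by case: (eqVneq y (f x)) => [->|]; rewrite ?andbF // andbT andbCA.
Qed.

Lemma reach_frel_in x v :
  (exists s, path frel_in x s /\ last x s = v) <->
  exists2 i, all D (traject f x i) & iter i f x = v.
Proof.
split=> [[s [+ <-]]|[i Di <-]].
  rewrite path_frel_in => /andP[/eqP s_eq Ds].
  by exists (size s); rewrite // [in RHS]s_eq last_traject.
exists (traject f (f x) i).
by rewrite path_frel_in size_traject eqxx Di last_traject.
Qed.

Lemma cycle_frel_in :
  (exists s, s != [::] /\ cycle frel_in s) <->
  exists x i, [/\ (0 < i)%N, all D (traject f x i) & iter i f x = x].
Proof.
split=> [[[|x s] [] //= _]|[x [[|i] [//= _ Di ix]]]].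
  rewrite path_frel_in size_rcons => /andP[/eqP s_eq Ds].
  exists x, (size s).+1; split=> //.
  by have := congr1 (last x) s_eq; rewrite last_rcons last_traject.
exists (traject f x i.+1); split=> //=.
have -> : rcons (traject f (f x) i) x = traject f (f x) i.+1.
  by rewrite trajectSr -iterSr iterS ix.
by rewrite path_frel_in size_traject eqxx.
Qed.

End RestrictedFunctionGraph.

Lemma res_bounds (l : int) (m : nat) : (0 < m)%N -> 0 <= res l m < m%:Z.
Proof. by move=> m_gt0; rewrite /res; lia. Qed.

Lemma resP (l q r : int) (m : nat) :
  l = q * m%:Z + r -> 0 <= r < m%:Z -> res l m = r.
Proof. by move=> -> r_bd; rewrite /res modzMDl modz_small. Qed.

Lemma res_eqMr (l1 l2 q : int) (m : nat) :
  l1 = l2 + q * m%:Z -> res l1 m = res l2 m.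
Proof. by move=> ->; rewrite /res addrC modzMDl. Qed.

Lemma bounded_int_extremes (P : pred int) (b : nat) :
  (exists x, P x) -> (forall x, P x -> 0 <= x <= b%:Z) ->
  exists m M, [/\ P m, P M, forall x, P x -> m <= x & forall x, P x -> x <= M].
Proof.
move=> [x Px] P_bd.
have absz_id y : P y -> (absz y)%:Z = y by move/P_bd; lia.
have exQ : exists j, P j%:Z by exists (absz x); rewrite absz_id.
have Q_bd j : P j%:Z -> (j <= b)%N by move/P_bd; lia.
exists (ex_minn exQ)%:Z, (ex_maxn exQ Q_bd)%:Z.
case: ex_minnP => m Pm m_min; case: ex_maxnP => M PM M_max.
split=> // y Py; rewrite -(absz_id y Py) lez_nat.
  by apply: m_min; rewrite absz_id.
by apply: M_max; rewrite absz_id.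
Qed.

Section GraphG.
Variables (n : int) (k : nat).
Hypothesis k_gt0 : (0 < k)%N.

Definition vertex (v : int) : bool := 0 <= v <= k%:Z.
Definition sink : int := res (n - 2) k.+1.
Definition nonsink : pred int := [pred a | vertex a && (a != sink)].
Definition collapse (a : int) : int := if sink < a then a - 1 else a.
(* The edge out of a = (i+n-2)_{k+1} ends at (i+n-1)_k; writing
   n - 2 = q (k+1) + sink, this is [collapse a] rotated by q + 2 modulo k. *)
Definition step (a : int) : int := res (collapse a + (((n - 2) %/ k.+1%:Z)%Z + 2)) k.

Lemma sink_bounds : 0 <= sink <= k%:Z.
Proof. by have := res_bounds (n - 2) (ltn0Sn k); rewrite -/sink; lia. Qed.

Lemma divz_eq_sink : n - 2 = ((n - 2) %/ k.+1%:Z)%Z * k.+1%:Z + sink.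
Proof. exact: divz_eq. Qed.

Lemma step_bounds a : 0 <= step a < k%:Z.
Proof. exact: res_bounds. Qed.

Lemma GedgeE : Gedge n k =2 frel_in step nonsink.
Proof.
move=> a b; rewrite /frel_in /nonsink /vertex /step /collapse /=.
have := sink_bounds; have := divz_eq_sink; set q := ((n - 2) %/ k.+1%:Z)%Z => n_eq sink_bd.
apply/existsP/idP => [[i /andP[/eqP-> /eqP->]]|/andP[a_ns /eqP->]].
- have i_lt := ltn_ord i.
  case: (leP (sink + i.+1%:Z) k%:Z) => wrap.
  + have -> : res (i.+1%:Z + n - 2) k.+1 = sink + i.+1%:Z.
      by apply: (@resP _ q); lia.
    have -> : (sink < sink + i.+1%:Z) by lia.
    apply/andP; split; first lia.
    by apply/eqP/(@res_eqMr _ _ q); lia.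
  + have -> : res (i.+1%:Z + n - 2) k.+1 = sink + i.+1%:Z - k.+1%:Z.
      by apply: (@resP _ (q + 1)); lia.
    have -> : (sink < sink + i.+1%:Z - k.+1%:Z) = false by lia.
    apply/andP; split; first lia.
    by apply/eqP/(@res_eqMr _ _ (q + 1)); lia.
- case: (ltP sink a) => a_sink.
  + have i_lt : (absz (a - sink - 1)%R < k)%N by lia.
    exists (Ordinal i_lt); apply/andP; split; apply/eqP => /=.
    * by apply/esym/(@resP _ q); lia.
    * by apply/esym/(@res_eqMr _ _ q); lia.
  + have i_lt : (absz (a - sink + k%:Z)%R < k)%N by lia.
    exists (Ordinal i_lt); apply/andP; split; apply/eqP => /=.
    * by apply/esym/(@resP _ (q + 1)); lia.
    * by apply/esym/(@res_eqMr _ _ (q + 1)); lia.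
Qed.

Lemma step_inj : {in nonsink &, injective step}.
Proof.
move=> a b /andP[a_v a_sink] /andP[b_v b_sink] /eqP.
rewrite /step /res eqz_modDr => /eqP.
have := sink_bounds; rewrite /vertex /collapse in a_v b_v *.
by case: ifP; case: ifP => ? ? ?; rewrite !modz_small; lia.
Qed.

Lemma stepD1 x : x != sink -> x + 1 != sink -> step (x + 1) = res (step x + 1) k.
Proof.
move=> x_sink x1_sink; rewrite /step /res modzDml; apply: (congr1 (modz^~ _)).
by rewrite /collapse; case: ifP; case: ifP; lia.
Qed.

Lemma res_pred_sink : 0 < sink -> res (n - 3) k.+1 = sink - 1.
Proof.
move=> sink_gt0; have := sink_bounds; have := divz_eq_sink.
by move=> n_eq sink_bd; apply: (@resP _ ((n - 2) %/ k.+1%:Z)%Z); lia.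
Qed.

Lemma res_succ_sink : sink < k%:Z -> res (n - 1) k.+1 = sink + 1.
Proof.
move=> sink_lt; have := sink_bounds; have := divz_eq_sink.
by move=> n_eq sink_bd; apply: (@resP _ ((n - 2) %/ k.+1%:Z)%Z); lia.
Qed.

Lemma step_vertex a : vertex (step a).
Proof. by have := step_bounds a; rewrite /vertex; lia. Qed.

Lemma vertex_iter_step i x : vertex x -> vertex (iter i step x).
Proof. by case: i => [|i] //= _; apply: step_vertex. Qed.

Lemma vertices_not_uniq s : all vertex s -> (k.+1 < size s)%N -> ~~ uniq s.
Proof.
move=> /allP s_v s_size; apply/negP => s_uniq.
have sub_s : {subset s <= [seq i%:Z | i <- iota 0 k.+1]}.
  move=> v /s_v; rewrite /vertex => v_bd; apply/mapP; exists (absz v); last by lia.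
  by rewrite mem_iota; lia.
by have := uniq_leq_size s_uniq sub_s; rewrite size_map size_iota leqNgt s_size.
Qed.

Lemma looping_vertex x : vertex x -> looping step x k.+1.
Proof.
move=> x_v; rewrite -[looping _ _ _]negbK -looping_uniq.
apply: vertices_not_uniq; last by rewrite size_traject.
by apply/allP => y /trajectP[i _ ->]; apply: vertex_iter_step.
Qed.

Lemma k_vertex : vertex k%:Z.
Proof. by rewrite /vertex; lia. Qed.

Lemma nonsink_iter_k i j :
  sink \notin traject step k%:Z i -> (j < i)%N -> nonsink (iter j step k%:Z).
Proof.
move=> no_sink lt_ji; rewrite /nonsink /= vertex_iter_step ?k_vertex //=.
by apply: contraNneq no_sink => <-; apply/trajectP; exists j.
Qed.

Lemma iter_step_k_neq a b :
  sink \notin traject step k%:Z b -> (a < b)%N -> iter a step k%:Z != iter b step k%:Z.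
Proof.
elim: a b => [|a IHa] [|b] // no_sink lt_ab.
  by have := step_bounds (iter b step k%:Z); rewrite iterS /=; lia.
move: no_sink; rewrite trajectSr mem_rcons inE negb_or => /andP[b_sink no_sink].
rewrite !iterS; apply: contraNneq (IHa b no_sink lt_ab) => /step_inj -> //.
  exact: nonsink_iter_k no_sink lt_ab.
by rewrite inE /= vertex_iter_step ?k_vertex // eq_sym.
Qed.

Lemma sink_in_traject_k : sink \in traject step k%:Z k.+1.
Proof.
apply/negPn/negP => no_sink.
have /trajectP[i lt_i e] := looping_vertex k_vertex.
by have := iter_step_k_neq no_sink lt_i; rewrite e eqxx.
Qed.

Definition hit_time : nat := index sink (traject step k%:Z k.+1).

Lemma hit_time_le : (hit_time <= k)%N.
Proof. by have := sink_in_traject_k; rewrite -index_mem size_traject. Qed.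

Lemma iter_hit_time : iter hit_time step k%:Z = sink.
Proof.
by have := nth_index k%:Z sink_in_traject_k; rewrite nth_traject // ltnS hit_time_le.
Qed.

Lemma sink_notin_traject_hit : sink \notin traject step k%:Z hit_time.
Proof.
apply/negP => /trajectP[j lt_j sink_j].
have := before_find k%:Z lt_j; rewrite nth_traject; last first.
  by apply: leq_trans lt_j (leqW hit_time_le).
by rewrite /= -sink_j eqxx.
Qed.

Definition tail : seq int := traject step k%:Z hit_time.+1.

Lemma all_nonsink_traject_k i : all nonsink (traject step k%:Z i) = (i <= hit_time)%N.
Proof.
apply/idP/idP => [/allP i_ok|le_i].
  rewrite leqNgt; apply/negP => lt_hit.
  have /i_ok : sink \in traject step k%:Z i.
    by apply/trajectP; exists hit_time; rewrite ?iter_hit_time.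
  by rewrite /nonsink /= eqxx andbF.
apply/allP => _ /trajectP[j lt_j ->].
exact: nonsink_iter_k sink_notin_traject_hit (leq_trans lt_j le_i).
Qed.

Lemma in_tailE v : in_tail n k v <-> v \in tail.
Proof.
transitivity (exists s, path (frel_in step nonsink) k%:Z s /\ last k%:Z s = v).
  by split=> -[s [p l]]; exists s; split=> //; move: p; rewrite (eq_path GedgeE).
rewrite reach_frel_in; split=> [[i]|/trajectP[i lt_i ->]].
  by rewrite all_nonsink_traject_k -ltnS => lt_i <-; apply/trajectP; exists i.
by exists i; rewrite // all_nonsink_traject_k -ltnS.
Qed.

Lemma k_in_tail : k%:Z \in tail.
Proof. exact: mem_head. Qed.

Lemma sink_in_tail : sink \in tail.
Proof. by apply/trajectP; exists hit_time; rewrite ?iter_hit_time. Qed.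

Definition off_tail : pred int := [pred x | vertex x && (x \notin tail)].

Lemma off_tail_nonsink x : off_tail x -> nonsink x.
Proof.
case/andP=> x_v x_tail; rewrite /nonsink /= x_v.
by apply: contraNneq x_tail => ->; apply: sink_in_tail.
Qed.

Lemma off_tail_step x : off_tail x -> off_tail (step x).
Proof.
move=> x_off; rewrite /off_tail /= step_vertex /=.
apply: contra (proj2 (andP x_off)) => /trajectP[[|i] lt_i].
  by have := step_bounds x; rewrite /=; lia.
rewrite iterS => e; have -> : x = iter i step k%:Z.
  apply: step_inj e; first exact: off_tail_nonsink.
  exact: nonsink_iter_k sink_notin_traject_hit lt_i.
by apply/trajectP; exists i => //; apply: ltnW.
Qed.

Lemma off_tail_iter i x : off_tail x -> off_tail (iter i step x).
Proof. by move=> x_off; elim: i => //= i; apply: off_tail_step. Qed.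

Lemma has_cycleE : has_cycle n k <-> exists x, off_tail x.
Proof.
transitivity (exists s, s != [::] /\ cycle (frel_in step nonsink) s).
  by split=> -[s [s_nil c]]; exists s; split=> //; move: c; rewrite (eq_cycle GedgeE).
rewrite cycle_frel_in; split=> [[x [i [i_gt0 x_ok ix]]]|[x x_off]].
  have x_ns : forall m, nonsink (iter m step x).
    by move=> m; apply: (allP x_ok); apply: periodic_iter_in_traject.
  exists x; rewrite /off_tail /= (proj1 (andP (x_ns 0%N))) /=.
  apply/negP => /trajectP[j lt_j x_j].
  have := x_ns (hit_time - j)%N; rewrite x_j -iterD subnK //.
  by rewrite iter_hit_time /nonsink /= eqxx andbF.
have /trajectP[j lt_j x_j] := looping_vertex (proj1 (andP x_off)).
exists (iter j step x), (k.+1 - j)%N; split; first by rewrite subn_gt0.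
  apply/allP => _ /trajectP[m _ ->]; rewrite -iterD.
  exact/off_tail_nonsink/off_tail_iter.
by rewrite -iterD subnK ?x_j // ltnW.
Qed.

Lemma no_cycle_in_tail : ~ has_cycle n k -> forall v, vertex v -> v \in tail.
Proof.
move=> no_cycle v v_v; apply/negPn/negP => v_tail.
by apply/no_cycle/has_cycleE; exists v; rewrite /off_tail /= v_v.
Qed.

Lemma iter_step_shift x N :
  (forall i, (i < N)%N -> [/\ iter i step x != sink, iter i step (x + 1) != sink
     & (iter i.+1 step x != k%:Z - 1) || (iter i.+1 step (x + 1) != 0)]) ->
  iter N step (x + 1) = iter N step x + 1.
Proof.
elim: N => [|N IHN] // shift_ok.
have [xN_sink x1N_sink no_wrap] := shift_ok N (ltnSn N).
have shiftN : iter N step (x + 1) = iter N step x + 1.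
  by apply: IHN => i lt_iN; apply/shift_ok/leqW.
rewrite shiftN in x1N_sink no_wrap; move: no_wrap; rewrite !iterS shiftN stepD1 //.
have := step_bounds (iter N step x); set w := step _ => w_bd.
have [->|w_top _] := eqVneq w (k%:Z - 1); first by rewrite subrK /res modzz !eqxx.
by rewrite /res modz_small //; lia.
Qed.

Lemma off_tail_extremes : (exists x, off_tail x) ->
  exists m M, [/\ off_tail m, off_tail M,
    forall x, off_tail x -> m <= x & forall x, off_tail x -> x <= M].
Proof. by move=> off_ex; apply: (bounded_int_extremes (b := k)) off_ex _ => x /andP[]. Qed.

Lemma succ_max_off_tail M :
  off_tail M -> (forall x, off_tail x -> x <= M) -> M + 1 \in tail.
Proof.
move=> /andP[M_v M_tail] M_max; apply/negPn/negP => M1_tail.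
have M_k : M != k%:Z by apply: contraNneq M_tail => ->; apply: k_in_tail.
by have := M_max (M + 1); rewrite /off_tail /= M1_tail andbT; move: M_v; rewrite /vertex; lia.
Qed.

Lemma pred_min_off_tail m : 0 \in tail ->
  off_tail m -> (forall x, off_tail x -> m <= x) -> m - 1 \in tail.
Proof.
move=> bot_in /andP[m_v m_tail] m_min; apply/negPn/negP => m1_tail.
have m_0 : m != 0 by apply: contraNneq m_tail => ->.
by have := m_min (m - 1); rewrite /off_tail /= m1_tail andbT; move: m_v; rewrite /vertex; lia.
Qed.

Lemma iter_tail_above_off_tail x b i :
  k%:Z - 1 \in tail -> off_tail x -> iter b step k%:Z = x + 1 ->
  (i + b <= hit_time)%N -> iter (i + b) step k%:Z = iter i step x + 1.
Proof.
move=> top_in x_off x1_b le_ib; rewrite iterD x1_b.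
apply: iter_step_shift => j lt_ji.
have /andP[_ xj_tail] := off_tail_iter j x_off.
have /andP[_ xj1_tail] := off_tail_iter j.+1 x_off.
split.
- by apply: contraNneq xj_tail => ->; apply: sink_in_tail.
- rewrite -x1_b -iterD; apply: contraNneq sink_notin_traject_hit => <-.
  by apply/trajectP; exists (j + b)%N => //; lia.
- by apply/orP; left; apply: contraNneq xj1_tail => ->.
Qed.

Lemma iter_off_tail_above_tail x a i :
  0 \in tail -> off_tail x -> iter a step k%:Z = x - 1 ->
  (i + a <= hit_time)%N -> iter i step x = iter (i + a) step k%:Z + 1.
Proof.
move=> bot_in x_off x_a le_ia; rewrite iterD x_a -{1}(subrK 1 x).
apply: iter_step_shift => j lt_ji; rewrite subrK.
have /andP[_ xj_tail] := off_tail_iter j x_off.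
have /andP[_ xj1_tail] := off_tail_iter j.+1 x_off.
split.
- rewrite -x_a -iterD; apply: contraNneq sink_notin_traject_hit => <-.
  by apply/trajectP; exists (j + a)%N => //; lia.
- by apply: contraNneq xj_tail => ->; apply: sink_in_tail.
- by apply/orP; right; apply: contraNneq xj1_tail => ->.
Qed.

Lemma no_cycle_of_top_pred_sink :
  k%:Z - 1 \in tail -> res (n - 3) k.+1 \in tail -> ~ has_cycle n k.
Proof.
move=> top_in pred_in /has_cycleE/off_tail_extremes[_ [M [_ M_off _ M_max]]].
have /trajectP[b lt_b M1_b] := succ_max_off_tail M_off M_max.
have := @iter_tail_above_off_tail M b (hit_time - b) top_in M_off (esym M1_b).
rewrite subnK // iter_hit_time => /(_ (leqnn _)) sink_y.
have /andP[y_v y_tail] := off_tail_iter (hit_time - b) M_off.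
have sink_gt0 : 0 < sink by move: y_v; rewrite /vertex sink_y; lia.
by move: pred_in; rewrite res_pred_sink // sink_y addrK (negbTE y_tail).
Qed.

Lemma no_cycle_of_bot_succ_sink :
  0 \in tail -> res (n - 1) k.+1 \in tail -> ~ has_cycle n k.
Proof.
move=> bot_in succ_in /has_cycleE/off_tail_extremes[m [_ [m_off _ m_min _]]].
have /trajectP[a lt_a m1_a] := pred_min_off_tail bot_in m_off m_min.
have := @iter_off_tail_above_tail m a (hit_time - a) bot_in m_off (esym m1_a).
rewrite subnK // iter_hit_time => /(_ (leqnn _)) y_sink.
have /andP[y_v y_tail] := off_tail_iter (hit_time - a) m_off.
have sink_lt : sink < k%:Z by move: y_v; rewrite /vertex y_sink; lia.
by move: succ_in; rewrite res_succ_sink // -y_sink (negbTE y_tail).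
Qed.

Lemma no_cycle_of_bot_top : 0 \in tail -> k%:Z - 1 \in tail -> ~ has_cycle n k.
Proof.
move=> bot_in top_in /has_cycleE/off_tail_extremes[m [M [m_off M_off m_min M_max]]].
have /trajectP[a lt_a m1_a] := pred_min_off_tail bot_in m_off m_min.
have /trajectP[b lt_b M1_b] := succ_max_off_tail M_off M_max.
case: (leqP b a) => [le_ba|lt_ab].
  have := @iter_tail_above_off_tail M b (a - b) top_in M_off (esym M1_b).
  rewrite subnK // -m1_a => /(_ lt_a) m_eq.
  by have := m_min _ (off_tail_iter (a - b) M_off); lia.
have := @iter_off_tail_above_tail m a (b - a) bot_in m_off (esym m1_a).
rewrite (subnK (ltnW lt_ab)) -M1_b => /(_ lt_b) M_eq.
by have := M_max _ (off_tail_iter (b - a) m_off); lia.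
Qed.

End GraphG.

Theorem lemma3p7 (k : nat) (n : int) (hk : (1 <= k)%N) :
  [<-> ~ has_cycle n k;
       in_tail n k (k%:Z - 1) /\ in_tail n k (res (n - 3) k.+1);
       in_tail n k 0 /\ in_tail n k (res (n - 1) k.+1);
       in_tail n k 0 /\ in_tail n k (k%:Z - 1)].
Proof.
have tailE := in_tailE n hk.
have covers v : ~ has_cycle n k -> vertex k v -> in_tail n k v.
  by move=> no_cycle v_v; apply/tailE/(no_cycle_in_tail hk no_cycle).
have res_vertex l : vertex k (res l k.+1).
  by have := res_bounds l (ltn0Sn k); rewrite /vertex; lia.
have top_vertex : vertex k (k%:Z - 1) by rewrite /vertex; lia.
have bot_vertex : vertex k 0 by rewrite /vertex; lia.
tfae=> [no_cycle|[/tailE top /tailE pred]|[/tailE bot /tailE succ]|[/tailE bot /tailE top]].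
- by split; apply: covers.
- by split; apply: covers => //; apply: no_cycle_of_top_pred_sink top pred.
- by split; apply: covers => //; apply: no_cycle_of_bot_succ_sink bot succ.
- exact: no_cycle_of_bot_top bot top.
Qed.
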